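(* For every connected graph $G$, the ordered pair $(O_{\rm SR}(G),O_{\rm R}(G))$ belongs to the set $\{(\mathcal{B},\mathcal{B}),(\mathcal{B},\mathcal{N}),(\mathcal{B},\mathcal{M}),(\mathcal{N},\mathcal{N}),(\mathcal{N},\mathcal{M}),(\mathcal{M},\mathcal{M})\}$.
   Context: All graphs are finite, simple and undirected; $d(x,y)$ is the shortest-path distance. For a connected graph $G$, a set $R\subseteq V(G)$ is a resolving set if for all distinct $x,y\in V(G)$ there is $z\in R$ with $d(x,z)\ne d(y,z)$; a set $S\subseteq V(G)$ is a strong resolving set if for all distinct $x,y\in V(G)$ there exists $z\in S$ such that $x$ lies on a $y$–$z$ geodesic or $y$ lies on an $x$–$z$ geodesic. In the Maker–Breaker resolving game (resp. strong resolving game) on $G$, Maker and Breaker alternately select a not-yet-chosen vertex of $G$; Maker wins if his selected vertices contain a resolving set (resp. strong resolving set) of $G$, and Breaker wins otherwise. In the M-game Maker moves first, in the B-game Breaker moves first. The outcome $O_{\rm R}(G)$ (resp. $O_{\rm SR}(G)$) is $\mathcal{M}$ if Maker has a winning strategy in both the M-game and the B-game, $\mathcal{B}$ if Breaker has a winning strategy in both, and $\mathcal{N}$ if the first player has a winning strategy in each. *)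

From mathcomp Require Import all_boot.
Set Implicit Arguments. Unset Strict Implicit. Unset Printing Implicit Defensive.

Section Graphs.
Variables (T : finType) (e : rel T).

Definition simple_graph : Prop := symmetric e /\ irreflexive e.
Definition connected_graph : Prop := forall x y : T, connect e x y.

Fixpoint reach (n : nat) (x y : T) : bool :=
  match n with
  | 0 => x == y
  | n'.+1 => reach n' x y || [exists z, e x z && reach n' z y]
  end.

(* shortest-path distance: least n with a walk of length <= n from x to y
   (in a connected graph every distance is < #|T|, so the default #|T| is
   never attained) *)
Definition dist (x y : T) : nat :=
  \big[minn/#|T|]_(n < #|T| | reach n x y) n.

(* x lies on some y--z geodesic: a walk y = v0, v1, ..., vk = z with
   k = d(y,z) passing through x *)
Definition on_geodesic (x y z : T) : bool :=
  [exists p : (dist y z).-tuple T,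
     [&& path e y p, last y p == z & x \in y :: p]].

Definition resolving (R : {set T}) : bool :=
  [forall x, forall y, (x != y) ==> [exists z in R, dist x z != dist y z]].

Definition strong_resolving (S : {set T}) : bool :=
  [forall x, forall y, (x != y) ==>
     [exists z in S, on_geodesic x y z || on_geodesic y x z]].

(* Maker-Breaker game: Maker wins iff his final set contains a set with
   property P. makerWins n maker_to_move M B : Maker has a winning
   strategy from position (M, B) (n is fuel >= number of free vertices). *)
Fixpoint makerWins (P : {set T} -> bool) (n : nat) (maker_to_move : bool)
    (M B : {set T}) : bool :=
  let win := [exists R : {set T}, (R \subset M) && P R] in
  match n with
  | 0 => win
  | n'.+1 =>
    if [forall v, v \in M :|: B] then win
    else if maker_to_move then
      [exists v, (v \notin M :|: B) && makerWins P n' false (v |: M) B]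
    else
      [forall v, (v \notin M :|: B) ==> makerWins P n' true M (v |: B)]
  end.

Definition makerWins_Mgame (P : {set T} -> bool) : bool :=
  makerWins P #|T| true set0 set0.
Definition makerWins_Bgame (P : {set T} -> bool) : bool :=
  makerWins P #|T| false set0 set0.

End Graphs.

(* Outcomes. OP (second player wins both games) is included only so that
   the outcome function is total; the theorem asserts it never occurs. *)
Inductive outcome := OB | ON | OM | OP.

Definition game_outcome (mM mB : bool) : outcome :=
  match mM, mB with
  | true, true => OM
  | false, false => OB
  | true, false => ON     (* first player wins each game *)
  | false, true => OP
  end.

Definition O_R (T : finType) (e : rel T) : outcome :=
  game_outcome (@makerWins_Mgame T (resolving e)) (@makerWins_Bgame T (resolving e)).
Definition O_SR (T : finType) (e : rel T) : outcome :=
  game_outcome (@makerWins_Mgame T (strong_resolving e))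
               (@makerWins_Bgame T (strong_resolving e)).

From mathcomp Require Import all_boot.

Set Implicit Arguments.
Unset Strict Implicit.
Unset Printing Implicit Defensive.

(* If x lies on a y--z geodesic and x != y, then d(x, z) < d(y, z), so every
   strong resolving set is resolving and a Maker win in the strong resolving
   game yields one in the resolving game: O_SR(G) <= O_R(G) for the order
   B < N < M.  In any Maker-Breaker game an extra vertex never hurts Maker, so
   a Maker win in the B-game yields one in the M-game, which rules out the
   fourth outcome (second player wins).  Neither argument uses simplicity or connectivity of G. *)

Lemma geq_bigmin_seq (I : eqType) (r : seq I) (P : pred I) (F : I -> nat) d i0 :
  i0 \in r -> P i0 -> \big[minn/d]_(i <- r | P i) F i <= F i0.
Proof.
move=> + Pi0; elim: r => // h t IH; rewrite inE big_cons.
move=> /predU1P[<-|i0t]; first by rewrite Pi0 geq_minl.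
by case: (P h); [apply: leq_trans (geq_minr _ _) _ |]; apply: IH.
Qed.

Lemma bigmin_leq_idx (I : finType) (P : pred I) (F : I -> nat) d :
  \big[minn/d]_(i | P i) F i <= d.
Proof. by elim/big_rec: _ => // i m _; apply: leq_trans (geq_minr _ _). Qed.

Section Distance.
Variables (T : finType) (e : rel T).

Lemma path_reach (x : T) (p : seq T) : path e x p -> reach e (size p) x (last x p).
Proof.
elim: p x => [|y p IH] x /=; first by rewrite eqxx.
by case/andP=> exy /IH yp; apply/orP; right; apply/existsP; exists y; rewrite exy.
Qed.

Lemma dist_leq_card (x y : T) : dist e x y <= #|T|.
Proof. exact: bigmin_leq_idx. Qed.

Lemma reach_dist_leq n (x y : T) : n < #|T| -> reach e n x y -> dist e x y <= n.
Proof.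
move=> lt_nT xy; rewrite /dist.
exact: (geq_bigmin_seq (@nat_of_ord _) _ (mem_index_enum (Ordinal lt_nT))).
Qed.

(* The tail of the geodesic after [x] is a strictly shorter walk from [x] to [z]. *)
Lemma on_geodesic_dist_lt (x y z : T) :
  x != y -> on_geodesic e x y z -> dist e x z < dist e y z.
Proof.
move=> xy /existsP[p /and3P[yp /eqP pz]].
rewrite in_cons (negPf xy) /=; have := size_tuple p.
move: (val p) yp pz => s + + + xs; case/splitPr: xs => s1 s2.
rewrite cat_path last_cat size_cat /= => /andP[_ /andP[_ xs2]] xz Ds.
have lt_s2 : size s2 < dist e y z by rewrite -Ds addnS ltnS leq_addl.
have := path_reach xs2; rewrite xz => /reach_dist_leq le_xz.
exact: leq_ltn_trans (le_xz (leq_trans lt_s2 (dist_leq_card y z))) lt_s2.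
Qed.

Lemma strong_resolving_resolving (S : {set T}) :
  strong_resolving e S -> resolving e S.
Proof.
move=> /forallP srS; apply/forallP=> x; apply/forallP=> y; apply/implyP=> xy.
have /existsP[z /andP[zS geo]] := implyP (forallP (srS x) y) xy.
apply/existsP; exists z; rewrite zS neq_ltn.
case/orP: geo => [/(on_geodesic_dist_lt xy)-> //|].
by rewrite eq_sym in xy; move/(on_geodesic_dist_lt xy)->; rewrite orbT.
Qed.

End Distance.

Lemma leq_cardsC_setU1 (T : finType) n (v : T) (A : {set T}) :
  v \notin A -> #|~: A| <= n.+1 -> #|~: (v |: A)| <= n.
Proof.
move=> vA le_An; rewrite -ltnS (leq_trans _ le_An) //; apply: proper_card.
by rewrite properC properUr // sub1set.
Qed.

Section MakerBreaker.
Variables (T : finType) (P : {set T} -> bool).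

Definition winning (M : {set T}) : bool := [exists R : {set T}, (R \subset M) && P R].

Lemma winningS (M M' : {set T}) : M \subset M' -> winning M -> winning M'.
Proof.
move=> sMM' /existsP[R /andP[sRM PR]]; apply/existsP; exists R.
by rewrite PR (subset_trans sRM sMM').
Qed.

Lemma makerWinsS n b (M B : {set T}) :
  makerWins P n.+1 b M B =
  if [forall v, v \in M :|: B] then winning M
  else if b then [exists v, (v \notin M :|: B) && makerWins P n false (v |: M) B]
  else [forall v, (v \notin M :|: B) ==> makerWins P n true M (v |: B)].
Proof. by []. Qed.

(* Maker can only ever claim vertices that Breaker does not own yet. *)
Lemma makerWins_winning n b (M B : {set T}) :
  makerWins P n b M B -> winning (M :|: ~: B).
Proof.
elim: n b M B => [|n IH] b M B; first exact/winningS/subsetUl.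
rewrite makerWinsS; case: ifP => [_|/negbT/forallPn[v v_free]].
  exact/winningS/subsetUl.
case: b => [/existsP[w /andP[w_free /IH]] | /forallP/(_ v)/implyP/(_ v_free)/IH].
  apply: winningS; rewrite -setUA subUset subxx andbT sub1set !inE.
  by move: w_free; rewrite inE negb_or => /andP[_ ->]; rewrite orbT.
by apply: winningS; rewrite setUS // setCS subsetUr.
Qed.

Lemma makerWins_fuel n b (M B : {set T}) :
  #|~: (M :|: B)| <= n -> makerWins P n.+1 b M B = makerWins P n b M B.
Proof.
elim: n b M B => [|n IH] b M B free_n.
  suff taken : [forall v, v \in M :|: B] by rewrite makerWinsS taken.
  apply/forallP=> v; move: free_n; rewrite leqn0 cards_eq0 => /eqP/setP/(_ v).
  by rewrite !inE => /negbFE.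
rewrite [LHS]makerWinsS [RHS]makerWinsS; case: ifP => // _.
case: b; [apply: eq_existsb | apply: eq_forallb] => v;
  case: (boolP (v \notin M :|: B)) => // v_free; rewrite IH //.
  by rewrite -setUA leq_cardsC_setU1.
by rewrite setUCA leq_cardsC_setU1.
Qed.

(* Maker follows his winning strategy from (M, B); whenever it prescribes a
   vertex he already owns in (M', B'), he claims an arbitrary free one instead. *)
Lemma makerWins_mono n b (M B M' B' : {set T}) :
    #|~: (M :|: B)| <= n -> M \subset M' -> B' \subset B ->
    M :|: B \subset M' :|: B' ->
  makerWins P n b M B -> makerWins P n b M' B'.
Proof.
elim: n b M B M' B' => [|n IH] b M B M' B' free_n sMM' sB'B sMB; first exact: winningS.
rewrite [makerWins _ _ _ M' _]makerWinsS.
case: ifP => [/forallP taken' /makerWins_winning | /negbT/forallPn[u u_free']].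
  apply: winningS; apply/subsetP=> x; rewrite !inE => /orP[/(subsetP sMM')//|xB].
  by case/setUP: (taken' x) => // /(subsetP sB'B); rewrite (negPf xB).
have free_sub w : w \notin M' :|: B' -> w \notin M :|: B by apply: contra; apply/subsetP.
rewrite makerWinsS ifF; last by apply/negbTE/forallPn; exists u; apply: free_sub.
case: b => [/existsP[v /andP[v_free W]] | /forallP W].
  have [w w_free' vw] : exists2 w, w \notin M' :|: B' & v \in w |: M'.
    case: (boolP (v \in M' :|: B')) => [/setUP[vM'|vB'] | v_free'].
    - by exists u; rewrite // setU1r.
    - by move: v_free; rewrite inE (subsetP sB'B v vB') orbT.
    - by exists v; rewrite ?setU11.
  apply/existsP; exists w; rewrite w_free' /=; apply: IH W => //.
  - by rewrite -setUA leq_cardsC_setU1.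
  - by apply/subsetP=> x /setU1P[-> // | /(subsetP sMM') xM']; rewrite setU1r.
  - rewrite -!setUA subUset sub1set (subsetP (setUS _ (subsetUl _ _)) _ vw) /=.
    exact: subset_trans sMB (subsetUr _ _).
apply/forallP=> w; apply/implyP=> w_free'.
apply: IH (implyP (W w) (free_sub w w_free')) => //.
- by rewrite setUCA leq_cardsC_setU1 // free_sub.
- exact: setUS.
- by rewrite !(setUCA _ [set w]) setUS.
Qed.

Lemma makerWins_Bgame_Mgame : makerWins_Bgame P -> makerWins_Mgame P.
Proof.
rewrite /makerWins_Bgame /makerWins_Mgame.
case def_n : #|T| => [//|n] W.
have [v _] : exists v : T, v \in T by apply/card_gt0P; rewrite def_n.
rewrite makerWinsS ifF; last by apply/negbTE/forallPn; exists v; rewrite !inE.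
apply/existsP; exists v; rewrite !inE /= -makerWins_fuel.
  by apply: makerWins_mono W; rewrite ?setU0 ?sub0set // setC0 cardsT def_n.
by rewrite !setU0 cardsC1 def_n.
Qed.

End MakerBreaker.

Lemma sub_makerWins (T : finType) (P Q : {set T} -> bool) n b (M B : {set T}) :
  subpred P Q -> makerWins P n b M B -> makerWins Q n b M B.
Proof.
move=> PQ; have win_PQ (A : {set T}) : winning P A -> winning Q A.
  by case/existsP=> R /andP[sRA PR]; apply/existsP; exists R; rewrite sRA PQ.
elim: n b M B => [|n IH] b M B; first exact: win_PQ.
rewrite !makerWinsS; case: ifP => _; first exact: win_PQ.
case: b => [/existsP[v /andP[v_free /IH W]] | /forallP W].
  by apply/existsP; exists v; rewrite v_free W.
by apply/forallP=> v; apply/implyP=> /(implyP (W v))/IH.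
Qed.

Lemma game_outcome_pairs (sM sB rM rB : bool) :
  (sB -> sM) -> (rB -> rM) -> (sM -> rM) -> (sB -> rB) ->
  let p := (game_outcome sM sB, game_outcome rM rB) in
  p = (OB, OB) \/ p = (OB, ON) \/ p = (OB, OM) \/
  p = (ON, ON) \/ p = (ON, OM) \/ p = (OM, OM).
Proof.
move=> /implyP + /implyP + /implyP + /implyP.
by case: sM sB rM rB => [] [] [] [] //= *; do ![by left | right].
Qed.

Theorem mainTheorem5 (T : finType) (e : rel T) :
  simple_graph e -> connected_graph e ->
  let p := (O_SR e, O_R e) in
  p = (OB, OB) \/ p = (OB, ON) \/ p = (OB, OM) \/
  p = (ON, ON) \/ p = (ON, OM) \/ p = (OM, OM).
Proof.
move=> _ _; have sub_SR_R := @strong_resolving_resolving T e.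
apply: game_outcome_pairs.
- exact: makerWins_Bgame_Mgame.
- exact: makerWins_Bgame_Mgame.
- exact: sub_makerWins sub_SR_R.
- exact: sub_makerWins sub_SR_R.
Qed.
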